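(* For $n\ge2$, with $\widetilde Q_n$, $\lambda_\pm$, the double suspension $\Sigma^2$ and $\iota\colon\Sigma^2\widetilde Q_n\to\widetilde Q_{n+1}$ as in the context, the homomorphism $\iota_*\circ\Sigma^2\colon\pi_{2n-1}(\widetilde Q_n)\to\pi_{2n+1}(\widetilde Q_{n+1})$ maps $\lambda_+\mapsto\lambda_+$ and $\lambda_-\mapsto\lambda_-$.
   Context: $\widetilde Q_n=\{(a,b)\in\mathbb R^{2n}\oplus\mathbb R^{2n}: |a|=|b|=1,\ \langle a,b\rangle=0\}$ (simply connected). For a subspace $S\subset V$ of a real vector space, $\Sigma^2S=\{(\sqrt{1-|X|^2}\,v,X): v\in S, X\in\mathbb R^2, |X|\le1\}\subset V\oplus\mathbb R^2$; in particular $\Sigma^2S^{2n-1}=S^{2n+1}\subset\mathbb R^{2n+2}$, and for $f\colon S^{2n-1}\to S$ one sets $\Sigma^2f(\sqrt{1-|X|^2}u,X)=(\sqrt{1-|X|^2}f(u),X)$, defining $\Sigma^2\colon\pi_{2n-1}(S)\to\pi_{2n+1}(\Sigma^2S)$. Let $j_+$ be the orientation-compatible orthogonal complex structure on $\mathbb R^2$, and define $\iota\colon\Sigma^2\widetilde Q_n\to\widetilde Q_{n+1}$ by $(\sqrt{1-|X|^2}(a,b),X)\mapsto\big((\sqrt{1-|X|^2}a,X),(\sqrt{1-|X|^2}b,-j_+X)\big)$. Spheres $S^{m}\subset\mathbb R^{m+1}$ carry the standard boundary orientation. $\lambda_+\in\pi_{2n-1}(\widetilde Q_n)$ is the class of $a\mapsto(a,-J_+a)$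 for an orthogonal complex structure $J_+$ on $\mathbb R^{2n}$ compatible with the orientation, and $\lambda_-$ is minus the class of $a\mapsto(a,-J_-a)$ for an orthogonal complex structure $J_-$ compatible with the opposite orientation (both independent of the choice). *)

From HB Require Import structures.
From mathcomp Require Import all_boot all_order all_algebra.
From mathcomp Require Import all_classical all_reals all_analysis.
Set Implicit Arguments. Unset Strict Implicit. Unset Printing Implicit Defensive.
Import Order.TTheory GRing.Theory Num.Theory numFieldNormedType.Exports.
Local Open Scope classical_set_scope.
Local Open Scope ring_scope.

Section Defs.
Variable R : realType.

Definition vdot (k : nat) (a b : 'rV[R]_k) : R := \sum_(i < k) a 0 i * b 0 i.
Definition vnorm (k : nat) (a : 'rV[R]_k) : R := Num.sqrt (vdot a a).

Definition sphere (k : nat) : set 'rV[R]_k := [set x | vnorm x = 1].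

Definition Qt (k : nat) : set ('rV[R]_k * 'rV[R]_k) :=
  [set p | vnorm p.1 = 1 /\ vnorm p.2 = 1 /\ vdot p.1 p.2 = 0].

(* Linear maps act on row vectors on the right: x |-> x *m J. *)
Definition ocs (k : nat) (J : 'M[R]_k) : Prop :=
  J *m J = - 1%:M /\ J *m J^T = 1%:M.

(* J is compatible with the orientation with sign [pos]: there is an
   orthonormal basis (rows of P) of the form (e_1, J e_1, ..., e_m, J e_m)
   which is positively (resp. negatively) oriented. *)
Definition ocs_oriented (pos : bool) (k : nat) (J : 'M[R]_k) : Prop :=
  exists P : 'M[R]_k,
    P *m P^T = 1%:M /\
    (if pos then 0 < \det P else \det P < 0) /\
    (forall i j : 'I_k, ~~ odd i -> val j = i.+1 -> row j P = row i P *m J).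

Definition ocs_pos (k : nat) (J : 'M[R]_k) := ocs J /\ ocs_oriented true J.
Definition ocs_neg (k : nat) (J : 'M[R]_k) := ocs J /\ ocs_oriented false J.

Definition jplus : 'M[R]_2 :=
  \matrix_(i < 2, j < 2)
     (if (val i == 0%N) && (val j == 1%N) then 1
      else if (val i == 1%N) && (val j == 0%N) then -1 else 0).

Definition lam (k : nat) (J : 'M[R]_k) (a : 'rV[R]_k) : 'rV[R]_k * 'rV[R]_k :=
  (a, - (a *m J)).

(* reflection of R^k in the first coordinate (represents -1 in pi_{k-1}) *)
Definition refl (k : nat) (x : 'rV[R]_k) : 'rV[R]_k :=
  \row_i (if val i == 0%N then - x 0 i else x 0 i).

(* double suspension of f : S^{m-1} -> R^p (+) R^p, as a map
   S^{m+1} subset R^m (+) R^2 -> (R^p (+) R^p) (+) R^2: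
   (sqrt(1-|X|^2) u, X) |-> (sqrt(1-|X|^2) f(u), X) *)
Definition susp2 (m p : nat) (f : 'rV[R]_m -> 'rV[R]_p * 'rV[R]_p)
  (y : 'rV[R]_(m + 2)) : ('rV[R]_p * 'rV[R]_p) * 'rV[R]_2 :=
  let v := lsubmx y in
  let X := rsubmx y in
  let s := vnorm v in
  (if s == 0 then (0, 0)
   else (s *: (f (s^-1 *: v)).1, s *: (f (s^-1 *: v)).2), X).

Definition iotaQ (p : nat) (w : ('rV[R]_p * 'rV[R]_p) * 'rV[R]_2)
  : 'rV[R]_(p + 2) * 'rV[R]_(p + 2) :=
  (row_mx w.1.1 w.2, row_mx w.1.2 (- (w.2 *m jplus))).

Definition homotopic (m : nat) (Y : topologicalType) (A : set 'rV[R]_m)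
  (B : set Y) (f g : 'rV[R]_m -> Y) : Prop :=
  exists H : R * 'rV[R]_m -> Y,
    {within [set t : R | 0 <= t <= 1] `*` A, continuous H} /\
    (forall t x, 0 <= t <= 1 -> A x -> B (H (t, x))) /\
    (forall x, A x -> H (0, x) = f x) /\
    (forall x, A x -> H (1, x) = g x).

End Defs.

From HB Require Import structures.
From mathcomp Require Import all_boot all_order all_algebra.
From mathcomp Require Import all_classical all_reals all_analysis.
From mathcomp Require Import ring lra zify.
Import Order.TTheory GRing.Theory Num.Theory numFieldNormedType.Exports.
Local Open Scope classical_set_scope.
Local Open Scope ring_scope.
Set Implicit Arguments. Unset Strict Implicit. Unset Printing Implicit Defensive.

(* Both composites are of the form y |-> (g y, - (g y) J1) with J1 = J (+) j_+
   and g the identity or a reflection: the double suspension of a linear map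
   is its direct sum with the identity of R^2, and iota puts j_+ on that
   summand.  J1 and the given J' are orthogonal complex structures on R^(2n+2)
   inducing the same orientation, so both are conjugate to the standard one by
   orthogonal matrices whose determinants have the same sign, whence
   J' = Q^T J1 Q with Q in SO(2n+2).  SO(k) is path-connected: Q is a product
   of an even number of Householder reflections, and each pair H_u H_v is
   joined to 1 = H_u H_u by moving the second vector along a segment.
   Conjugating J1 along such a path gives the homotopy. *)

Section EntrywiseContinuity.
Variables (R : realType) (T : topologicalType).

Definition entry_continuous m n (F : T -> 'M[R]_(m, n)) :=
  forall i j, continuous (fun t => F t i j).

Lemma entry_continuousP m n (F : T -> 'M[R]_(m, n)) :
  entry_continuous F <-> continuous F.
Proof.
split=> [hF x|hF i j x]; last first.
  apply: (@continuous_comp _ _ _ F (fun M => M i j)); first exact: hF.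
  exact: coord_continuous.
apply/cvgrPdist_le => /= e e0; near=> y.
rewrite [leLHS]/Num.Def.normr/= mx_normrE (bigmax_le _ (ltW e0))//= => ij _.
rewrite !mxE/=; move: ij; near: y; apply: filter_forall => /= ij.
by have /cvgrPdist_le /(_ e e0) := hF ij.1 ij.2 x.
Unshelve. all: by end_near. Qed.

Lemma entry_continuous_cst m n (M : 'M[R]_(m, n)) : entry_continuous (fun=> M).
Proof. by move=> i j; apply: cst_continuous. Qed.

Lemma entry_continuous_add m n (F G : T -> 'M[R]_(m, n)) :
  entry_continuous F -> entry_continuous G -> entry_continuous (fun t => F t + G t).
Proof.
by move=> hF hG i j x; under eq_fun do rewrite mxE; apply: cvgD; [exact: hF|exact: hG].
Qed.

Lemma entry_continuous_opp m n (F : T -> 'M[R]_(m, n)) :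
  entry_continuous F -> entry_continuous (fun t => - F t).
Proof. by move=> hF i j x; under eq_fun do rewrite mxE; apply: cvgN; exact: hF. Qed.

Lemma entry_continuous_scale m n (a : T -> R) (F : T -> 'M[R]_(m, n)) :
  continuous a -> entry_continuous F -> entry_continuous (fun t => a t *: F t).
Proof.
by move=> ha hF i j x; under eq_fun do rewrite mxE; apply: cvgM; [exact: ha|exact: hF].
Qed.

Lemma entry_continuous_tr m n (F : T -> 'M[R]_(m, n)) :
  entry_continuous F -> entry_continuous (fun t => (F t)^T).
Proof. by move=> hF i j; under eq_fun do rewrite mxE; exact: hF. Qed.

Lemma entry_continuous_mul m n p (F : T -> 'M[R]_(m, n)) (G : T -> 'M[R]_(n, p)) :
  entry_continuous F -> entry_continuous G -> entry_continuous (fun t => F t *m G t).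
Proof.
move=> hF hG i j; under eq_fun do rewrite mxE.
apply: continuous_big => [|l _ x]; first exact: add_continuous.
by apply: cvgM; [exact: hF|exact: hG].
Qed.

End EntrywiseContinuity.

Section InnerProduct.
Variables (R : realType) (k : nat).
Implicit Types (u v w x y : 'rV[R]_k) (M N P : 'M[R]_k).

Lemma vdotE u v : vdot u v = (u *m v^T) 0 0.
Proof. by rewrite /vdot !mxE; apply: eq_bigr => i _; rewrite !mxE. Qed.

Lemma vdotC u v : vdot u v = vdot v u.
Proof. by rewrite /vdot; apply: eq_bigr => i _; rewrite mulrC. Qed.

Lemma vdotDl u v w : vdot (u + v) w = vdot u w + vdot v w.
Proof. by rewrite /vdot -big_split; apply: eq_bigr => i _; rewrite !mxE mulrDl. Qed.

Lemma vdotZl (a : R) u w : vdot (a *: u) w = a * vdot u w.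
Proof. by rewrite /vdot mulr_sumr; apply: eq_bigr => i _; rewrite !mxE mulrA. Qed.

Lemma vdotNl u w : vdot (- u) w = - vdot u w.
Proof. by rewrite -scaleN1r vdotZl mulN1r. Qed.

Lemma vdotBl u v w : vdot (u - v) w = vdot u w - vdot v w.
Proof. by rewrite vdotDl vdotNl. Qed.

Lemma vdotDr u v w : vdot w (u + v) = vdot w u + vdot w v.
Proof. by rewrite !(vdotC w) vdotDl. Qed.

Lemma vdotZr (a : R) u w : vdot w (a *: u) = a * vdot w u.
Proof. by rewrite !(vdotC w) vdotZl. Qed.

Lemma vdotNr u w : vdot w (- u) = - vdot w u.
Proof. by rewrite !(vdotC w) vdotNl. Qed.

Lemma vdotBr u v w : vdot w (u - v) = vdot w u - vdot w v.
Proof. by rewrite !(vdotC w) vdotBl. Qed.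

Lemma vdot0r u : vdot u 0 = 0.
Proof. by rewrite /vdot big1 // => i _; rewrite !mxE mulr0. Qed.

Lemma vdot_ge0 u : 0 <= vdot u u.
Proof. by apply: sumr_ge0 => i _; rewrite -expr2 sqr_ge0. Qed.

Lemma vdot_eq0 u : vdot u u = 0 -> u = 0.
Proof.
move=> /eqP; rewrite /vdot psumr_eq0 => [/allP u0|i _]; last by rewrite -expr2 sqr_ge0.
apply/rowP => i; rewrite mxE.
by have /= := u0 i (mem_index_enum _); rewrite mulf_eq0 orbb => /eqP.
Qed.

Lemma vdot_delta (i j : 'I_k) :
  vdot (delta_mx 0 i) (delta_mx 0 j) = (i == j)%:R :> R.
Proof.
rewrite vdotE trmx_delta mul_delta_mx_cond.
by case: (i == j); rewrite ?mulr1n ?mulr0n !mxE.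
Qed.

Lemma vdot_mulmxr x y M : vdot x (y *m M) = vdot (x *m M^T) y.
Proof. by rewrite !vdotE trmx_mul mulmxA. Qed.

Lemma mulmx_trmx_vdot x w : x *m w^T = (vdot x w)%:M.
Proof. by rewrite vdotE -mx11_scalar. Qed.

Lemma vnorm_eq1 y : vnorm y = 1 <-> vdot y y = 1.
Proof.
split=> h; last by rewrite /vnorm h sqrtr1.
by have := sqr_sqrtr (vdot_ge0 y); rewrite -/(vnorm y) h expr1n.
Qed.

Lemma vnorm_eq0 y : vnorm y = 0 -> y = 0.
Proof.
move=> h; apply: vdot_eq0.
by have := sqr_sqrtr (vdot_ge0 y); rewrite -/(vnorm y) h expr0n.
Qed.

(* The matrix determinant lemma, from the two factorisations of the bordered
   matrix [[1, -u^T], [w, 1]]. *)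
Lemma det1_add_rank1 u w : \det (1%:M + u^T *m w) = 1 + vdot w u.
Proof.
have E1 : block_mx (1%:M : 'M[R]_k) (- u^T) w (1%:M : 'M[R]_1) =
  block_mx 1%:M 0 w 1%:M *m block_mx 1%:M (- u^T) 0 (1%:M + w *m u^T).
  rewrite mulmx_block ?mul1mx ?mul0mx ?mulmx0 ?mulmx1 ?addr0.
  by rewrite mulmxN addrCA addNr addr0.
have E2 : block_mx (1%:M : 'M[R]_k) (- u^T) w (1%:M : 'M[R]_1) =
  block_mx (1%:M + u^T *m w) (- u^T) 0 1%:M *m block_mx 1%:M 0 w 1%:M.
  rewrite mulmx_block ?mul1mx ?mul0mx ?mulmx0 ?mulmx1 ?add0r ?addr0.
  by rewrite mulNmx addrK.
have := congr1 determinant E1.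
rewrite E2 !det_mulmx det_lblock !det_ublock !det1 !mul1r !mulr1.
by move=> ->; rewrite det_mx11 vdotE !mxE.
Qed.

Definition householder w : 'M[R]_k := 1%:M - (2 / vdot w w) *: (w^T *m w).

Lemma householderE x w : x *m householder w = x - (2 / vdot w w * vdot x w) *: w.
Proof.
by rewrite mulmxBr mulmx1 -scalemxAr mulmxA mulmx_trmx_vdot mul_scalar_mx scalerA.
Qed.

Lemma trmx_householder w : (householder w)^T = householder w.
Proof. by rewrite /householder linearB /= trmx1 linearZ /= trmx_mul trmxK. Qed.

Lemma householderK w : vdot w w != 0 -> householder w *m householder w = 1%:M.
Proof.
move=> w0; apply/row_matrixP => i; rewrite row_mul rowE row1 !householderE.
set e := delta_mx 0 i; set c := 2 / vdot w w.
rewrite vdotBl vdotZl -addrA -opprD -scalerDl.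
have -> : c * vdot e w + c * (vdot e w - c * vdot e w * vdot w w) = 0.
  by rewrite /c; field.
by rewrite scale0r subr0.
Qed.

Lemma det_householder w : vdot w w != 0 -> \det (householder w) = -1.
Proof.
move=> w0; have -> : householder w = 1%:M + (- (2 / vdot w w) *: w)^T *m w.
  by rewrite /householder [(_ *: w)^T]linearZ /= -scalemxAl scaleNr.
by rewrite det1_add_rank1 vdotZr mulNr divfK //; ring.
Qed.

Lemma householderZ (a : R) w : a != 0 -> householder (a *: w) = householder w.
Proof.
move=> a0; rewrite /householder vdotZl vdotZr [(_ *: w)^T]linearZ /=.
rewrite -scalemxAl -scalemxAr !scalerA.
have [->|w0] := eqVneq (vdot w w) 0; first by rewrite !(mulr0, invr0, mul0r).
by congr (_ - _ *: _); field; rewrite a0 w0.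
Qed.

Lemma householder_fix x w : vdot x w = 0 -> x *m householder w = x.
Proof. by move=> xw; rewrite householderE xw mulr0 scale0r subr0. Qed.

(* The witness is [r - e], normalised. *)
Lemma exists_unit_householder_swap r e : vdot r r = 1 -> vdot e e = 1 -> r != e ->
  exists2 u, vdot u u = 1 & r *m householder u = e /\
    forall x, vdot x r = 0 -> vdot x e = 0 -> x *m householder u = x.
Proof.
move=> rr ee re; set d := vdot (r - e) (r - e).
have d0 : d != 0 by apply: contra_neq re => /vdot_eq0/eqP; rewrite subr_eq0 => /eqP.
have sd0 : Num.sqrt d != 0 by rewrite sqrtr_eq0 -ltNge lt_def d0 vdot_ge0.
exists ((Num.sqrt d)^-1 *: (r - e)).
  by rewrite vdotZl vdotZr mulrA -invfM -expr2 sqr_sqrtr ?vdot_ge0 // mulVf.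
rewrite householderZ ?invr_eq0 //; split => [|x xr xe]; last first.
  by rewrite householder_fix // vdotBr xr xe subrr.
have hd : d = 2 * vdot r (r - e) by rewrite /d !vdotBl !vdotBr rr ee (vdotC e r); ring.
rewrite householderE -/d.
have -> : 2 / d * vdot r (r - e) = 1.
  have r0 : vdot r (r - e) != 0 by apply: contra_neq d0; rewrite hd => ->; rewrite mulr0.
  by rewrite hd; field.
by rewrite scale1r opprB addrC subrK.
Qed.

Definition orthmx M : Prop := M *m M^T = 1%:M.

Lemma orthmx_vdot_row M (i j : 'I_k) :
  orthmx M -> vdot (row i M) (row j M) = (i == j)%:R.
Proof.
move=> oM; have := congr1 (fun N : 'M[R]_k => N i j) oM; rewrite !mxE => <-.
by apply: eq_bigr => l _; rewrite !mxE.
Qed.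

Lemma orthmx_mulTmx M : orthmx M -> M^T *m M = 1%:M.
Proof. exact: mulmx1C. Qed.

Lemma orthmx_tr M : orthmx M -> orthmx M^T.
Proof. by rewrite /orthmx trmxK => /orthmx_mulTmx. Qed.

Lemma orthmx_mul M N : orthmx M -> orthmx N -> orthmx (M *m N).
Proof. by move=> oM oN; rewrite /orthmx trmx_mul mulmxA -(mulmxA M) oN mulmx1 oM. Qed.

Lemma orthmx1 : orthmx 1%:M.
Proof. by rewrite /orthmx trmx1 mulmx1. Qed.

Lemma orthmx_householder w : vdot w w != 0 -> orthmx (householder w).
Proof. by move=> w0; rewrite /orthmx trmx_householder householderK. Qed.

Definition unit_seq (s : seq 'rV[R]_k) := forall w, w \in s -> vdot w w = 1.

Definition householder_prod (s : seq 'rV[R]_k) : 'M[R]_k :=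
  foldr (fun w M => householder w *m M) 1%:M s.

Lemma householder_prod_rcons s u :
  householder_prod (rcons s u) = householder_prod s *m householder u.
Proof. by elim: s => [|a s IH] /=; rewrite ?mul1mx ?mulmx1 // IH mulmxA. Qed.

Lemma det_householder_prod s : unit_seq s -> \det (householder_prod s) = (-1) ^+ size s.
Proof.
elim: s => [|a s IH] us /=; first by rewrite det1.
rewrite det_mulmx det_householder ?IH ?exprS // => [w ws|].
  by apply: us; rewrite inE ws orbT.
by rewrite us ?mem_head // oner_eq0.
Qed.

(* Induction on [m]: one reflection turns row [m] into [e_m] and fixes the
   rows below it, which are already standard basis vectors. *)
Lemma householder_prod_of_orthmx_rows m P : orthmx P ->
  (forall i : 'I_k, (m <= i)%N -> row i P = delta_mx 0 i) ->
  exists2 s, unit_seq s & P = householder_prod s.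
Proof.
elim: m P => [|m IH] P oP hP.
  by exists [::] => //; apply/row_matrixP => i; rewrite hP // row1.
have [km|mk] := leqP k m.
  by apply: IH => // i mi; have := ltn_ord i; rewrite ltnNge (leq_trans km mi).
pose j := Ordinal mk.
have [Pj|Pj] := eqVneq (row j P) (delta_mx 0 j).
  apply: IH => // i; rewrite leq_eqVlt => /predU1P[mi|/hP //].
  by have -> : i = j by exact: val_inj.
have rr : vdot (row j P) (row j P) = 1 by rewrite orthmx_vdot_row ?eqxx.
have ee : vdot (delta_mx 0 j) (delta_mx 0 j) = 1 :> R by rewrite vdot_delta eqxx.
have [u uu [ru fixu]] := exists_unit_householder_swap rr ee Pj.
have u0 : vdot u u != 0 by rewrite uu oner_eq0.
have [s us Es] : exists2 s, unit_seq s & P *m householder u = householder_prod s.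
  apply: IH => [|i]; first exact/orthmx_mul/orthmx_householder.
  rewrite row_mul leq_eqVlt => /predU1P[mi|mi].
    by have -> : i = j by exact: val_inj.
  have ij : (i == j) = false by apply: contraTF mi => /eqP ->; rewrite ltnn.
  rewrite hP // fixu // ?vdot_delta ?ij //.
  by rewrite -(hP i mi) orthmx_vdot_row ?ij.
exists (rcons s u) => [w|].
  by rewrite mem_rcons inE => /predU1P[->|/us].
by rewrite householder_prod_rcons -Es -mulmxA householderK ?mulmx1.
Qed.

Lemma householder_prod_of_orthmx P :
  orthmx P -> exists2 s, unit_seq s & P = householder_prod s.
Proof.
move=> oP; apply: (@householder_prod_of_orthmx_rows k) => // i.
by rewrite leqNgt ltn_ord.
Qed.

End InnerProduct.

Lemma seq_ind2 (T : Type) (P : seq T -> Prop) :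
  P [::] -> (forall u, P [:: u]) -> (forall u v s, P s -> P [:: u, v & s]) ->
  forall s, P s.
Proof.
move=> P0 P1 P2 s; have [n] := ubnP (size s).
elim: n s => [|n IH] [|u [|v s]] //= sn.
by apply/P2/IH; rewrite -ltnS ltnW.
Qed.

Section SpecialOrthogonalPaths.
Variables (R : realType) (k : nat).
Implicit Types (u v w y : 'rV[R]_k) (J M Q : 'M[R]_k).

Lemma entry_continuous_comp (S T : topologicalType) m n (f : S -> T)
    (F : T -> 'M[R]_(m, n)) :
  continuous f -> entry_continuous F -> entry_continuous (fun s => F (f s)).
Proof.
move=> hf hF i j s.
by apply: (@continuous_comp _ _ _ f (fun x => F x i j)); [exact: hf|exact: hF].
Qed.

Lemma entry_continuous_householder (T : topologicalType) (w : T -> 'rV[R]_k) :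
  entry_continuous w -> (forall t, vdot (w t) (w t) != 0) ->
  entry_continuous (fun t => householder (w t)).
Proof.
move=> hw w0; apply: entry_continuous_add; first exact: entry_continuous_cst.
apply/entry_continuous_opp/entry_continuous_scale; last first.
  by apply: entry_continuous_mul => //; exact: entry_continuous_tr.
have cw : continuous (fun t => vdot (w t) (w t)).
  under eq_fun do rewrite vdotE.
  exact: (entry_continuous_mul hw (entry_continuous_tr hw)).
by move=> t; apply: cvgM; [exact: cvg_cst|apply: cvgV; [exact: w0|exact: cw]].
Qed.

Definition so_path Q := exists M : R -> 'M[R]_k,
  [/\ entry_continuous M, forall t, orthmx (M t), M 0 = 1%:M & M 1 = Q].

Lemma so_path_mul A B : so_path A -> so_path B -> so_path (A *m B).
Proof.
move=> [MA [cA oA A0 A1]] [MB [cB oB B0 B1]].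
exists (fun t => MA t *m MB t); split.
- exact: entry_continuous_mul.
- by move=> t; apply: orthmx_mul.
- by rewrite /= A0 B0 mulmx1.
- by rewrite /= A1 B1.
Qed.

(* The path is [H_u H_w] with [w] running from [u] to [+-v]; the sign makes
   [vdot (u + +-v) w = 1 + vdot u (+-v)] positive, so [w] never vanishes. *)
Lemma so_path_householder2 u v : vdot u u = 1 -> vdot v v = 1 ->
  so_path (householder u *m householder v).
Proof.
move=> uu vv.
pose v' := if 0 <= vdot u v then v else - v.
have [v'v' uv' Hv'] :
    [/\ vdot v' v' = 1, 0 <= vdot u v' & householder v' = householder v].
  rewrite /v'; case: ifPn => [//|]; rewrite -ltNge => uv.
  by rewrite vdotNl vdotNr opprK vdotNr oppr_ge0 (ltW uv) -scaleN1r householderZ.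
pose w (t : R) := (1 - t) *: u + t *: v'.
have w0 t : vdot (w t) (w t) != 0.
  apply/eqP => /vdot_eq0 w_eq0.
  have : vdot (u + v') (w t) = 1 + vdot u v'.
    by rewrite /w !vdotDl !vdotDr !vdotZr uu v'v' (vdotC v' u); ring.
  by rewrite w_eq0 vdot0r; lra.
exists (fun t => householder u *m householder (w t)); split.
- apply: entry_continuous_mul; first exact: entry_continuous_cst.
  apply: entry_continuous_householder => //; apply: entry_continuous_add.
    apply: entry_continuous_scale; last exact: entry_continuous_cst.
    by move=> t; apply: cvgB; [exact: cvg_cst|exact: cvg_id].
  by apply: entry_continuous_scale; [move=> t; exact: cvg_id|exact: entry_continuous_cst].
- by move=> t; apply: orthmx_mul; apply: orthmx_householder; rewrite ?uu ?oner_eq0.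
- by rewrite /= /w subr0 scale1r scale0r addr0 householderK // uu oner_eq0.
- by rewrite /= /w subrr scale0r add0r scale1r Hv'.
Qed.

Lemma so_path_householder_prod s :
  unit_seq s -> ~~ odd (size s) -> so_path (householder_prod s).
Proof.
elim/seq_ind2: s => [_ _|//|u v s IH us /= es].
  exists (fun=> 1%:M); split => //; first exact: entry_continuous_cst.
  by move=> t; exact: orthmx1.
rewrite mulmxA; apply: so_path_mul.
  by apply: so_path_householder2; apply: us; rewrite !inE eqxx ?orbT.
apply: IH; last by rewrite negbK in es.
by move=> w ws; apply: us; rewrite !inE ws !orbT.
Qed.

Lemma so_path_orthmx Q : orthmx Q -> 0 < \det Q -> so_path Q.
Proof.
move=> oQ; have [s us ->] := householder_prod_of_orthmx oQ => dQ.
apply: so_path_householder_prod => //; apply: contraTN dQ => odd_s.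
by rewrite det_householder_prod // -signr_odd odd_s expr1 -leNgt lerN10.
Qed.

Lemma Qt_lam J y : J^T = - J -> orthmx J -> vnorm y = 1 -> Qt (lam J y).
Proof.
move=> skewJ oJ /vnorm_eq1 yy; split; first exact/vnorm_eq1.
have yJJy : vdot (y *m J) (y *m J) = vdot y y.
  by rewrite vdot_mulmxr -mulmxA oJ mulmx1.
have yJy : vdot y (y *m J) = - vdot y (y *m J).
  by rewrite [LHS]vdot_mulmxr skewJ mulmxN vdotNl vdotC.
split; first by apply/vnorm_eq1; rewrite vdotNl vdotNr opprK yJJy.
by rewrite vdotNr; lra.
Qed.

Lemma homotopic_lam_conj J Q (g : 'rV[R]_k -> 'rV[R]_k) :
  J^T = - J -> orthmx J -> orthmx Q -> 0 < \det Q -> continuous g ->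
  (forall x, sphere x -> sphere (g x)) ->
  homotopic (@sphere R k) (@Qt R k) (fun y => lam J (g y))
    (fun y => lam (Q^T *m J *m Q) (g y)).
Proof.
move=> skewJ oJ oQ dQ cg sg; have [M [cM oM M0 M1]] := so_path_orthmx oQ dQ.
pose N t := (M t)^T *m J *m M t.
exists (fun p => lam (N p.1) (g p.2)); split; last split; last split.
- have cg2 : continuous (fun p : R * 'rV[R]_k => g p.2).
    by move=> p; apply: (@continuous_comp _ _ _ snd g); [exact: cvg_snd|exact: cg].
  have cN : continuous (fun p : R * 'rV[R]_k => - (g p.2 *m N p.1)).
    apply/entry_continuousP/entry_continuous_opp/entry_continuous_mul.
      exact/entry_continuousP.
    apply/(entry_continuous_comp (f := fst)) => [p|]; first exact: cvg_fst.
    apply: entry_continuous_mul => //.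
    apply: entry_continuous_mul; first exact: entry_continuous_tr.
    exact: entry_continuous_cst.
  by apply: continuous_subspaceT => p; exact: cvg_pair (cg2 p) (cN p).
- move=> t x _ sx; apply: Qt_lam; last exact: sg.
    by rewrite /N !trmx_mul trmxK skewJ mulNmx mulmxN mulmxA.
  by apply: orthmx_mul => //; apply: orthmx_mul => //; exact: orthmx_tr.
- by move=> x _; rewrite /N M0 trmx1 mul1mx mulmx1.
- by move=> x _; rewrite /N M1.
Qed.

End SpecialOrthogonalPaths.

Section StandardComplexStructure.
Variables (R : realType) (k : nat).

Definition std_ocs : 'M[R]_k := \matrix_(i, j)
  (if odd j && (i.+1 == j :> nat) then 1
   else if odd i && (j.+1 == i :> nat) then -1 else 0).

Lemma row_std_ocs_even (i j : 'I_k) : ~~ odd i -> val j = i.+1 ->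
  row i std_ocs = delta_mx 0 j.
Proof.
move=> ei ji; apply/rowP => l; rewrite !mxE eqxx (negbTE ei) /=.
have [->|lj] := eqVneq l j; first by rewrite ji /= ei eqxx.
have -> : (i.+1 == l :> nat) = false.
  by apply: contra_neqF lj => /eqP il; apply: val_inj; rewrite ji.
by rewrite andbF.
Qed.

Lemma row_std_ocs_odd (i j : 'I_k) : ~~ odd j -> val i = j.+1 ->
  row i std_ocs = - delta_mx 0 j.
Proof.
move=> ej ij; apply/rowP => l; rewrite !mxE eqxx ij /= ej /=.
have -> : odd l && (j.+2 == l :> nat) = false.
  by case: (eqVneq j.+2 l) => [<-|]; rewrite ?andbF //= ej.
have [->|lj] := eqVneq l j; first by rewrite eqxx.
have -> : (l.+1 == j.+1 :> nat) = false by rewrite eqSS; exact/negbTE.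
by rewrite oppr0.
Qed.

Lemma ocs_skew_orthmx (J : 'M[R]_k) : ocs J -> J^T = - J /\ orthmx J.
Proof.
move=> [JJ JJt]; split => //.
by rewrite -[J^T]mul1mx -[1%:M]opprK -JJ mulNmx -mulmxA JJt mulmx1.
Qed.

(* The rows of [P] are the oriented basis (e_1, J e_1, ...), so [P J = std_ocs P]. *)
Lemma ocs_oriented_conj_std (pos : bool) (J : 'M[R]_k) :
  ~~ odd k -> ocs J -> ocs_oriented pos J ->
  exists P : 'M[R]_k, [/\ orthmx P, if pos then 0 < \det P else \det P < 0
                       & J = P^T *m std_ocs *m P].
Proof.
move=> ek [JJ _] [P [oP [sP Prows]]]; exists P; split => //.
suff E : P *m J = std_ocs *m P.
  by rewrite -mulmxA -E mulmxA (orthmx_mulTmx oP) mul1mx.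
apply/row_matrixP => i; rewrite !row_mul.
have [oi|ei] := boolP (odd i).
  have i0 : (0 < i)%N by case: (nat_of_ord i) oi.
  have ik : (i.-1 < k)%N by rewrite prednK // ltnW.
  pose j := Ordinal ik; have ej : ~~ odd j by rewrite /= -oddS prednK.
  have ij : val i = j.+1 by rewrite /= prednK.
  rewrite (Prows j i ej ij) -mulmxA JJ mulmxN mulmx1.
  by rewrite (row_std_ocs_odd ej ij) mulNmx -rowE.
have ik : (i.+1 < k)%N.
  rewrite ltn_neqAle ltn_ord andbT; apply: contraNneq ek => <-.
  by rewrite /= ei.
pose j := Ordinal ik.
by rewrite -(Prows i j ei erefl) (row_std_ocs_even ei (erefl : val j = i.+1)) -rowE.
Qed.

End StandardComplexStructure.

Section DoubleSuspension.
Variable R : realType.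

Lemma jplus_ocs : ocs (jplus R).
Proof.
split; apply/matrixP => i j; rewrite !mxE !big_ord_recl big_ord0 !mxE;
  case: i => [[|[|i]] hi]; case: j => [[|[|j]] hj] //=; rewrite ?mxE /=; lra.
Qed.

Lemma ocs_block m p (A : 'M[R]_m) (B : 'M[R]_p) :
  ocs A -> ocs B -> ocs (block_mx A 0 0 B).
Proof.
move=> [AA AAt] [BB BBt]; split.
  rewrite mulmx_block !mulmx0 !mul0mx !addr0 !add0r AA BB.
  by rewrite (scalar_mx_block m p (1 : R)) opp_block_mx !oppr0.
rewrite tr_block_mx !trmx0 mulmx_block !mulmx0 !mul0mx !addr0 !add0r AAt BBt.
by rewrite scalar_mx_block.
Qed.

Lemma orthmx_block m (P : 'M[R]_m) :
  orthmx P -> orthmx (block_mx P 0 0 (1%:M : 'M[R]_2)).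
Proof.
move=> oP; rewrite /orthmx tr_block_mx !trmx0 trmx1 mulmx_block !mulmx0 !mul0mx.
by rewrite !addr0 !add0r oP mulmx1 scalar_mx_block.
Qed.

Lemma std_ocs_block m : ~~ odd m ->
  std_ocs R (m + 2) = block_mx (std_ocs R m) 0 0 (jplus R).
Proof.
move=> em; apply/matrixP => i j.
case: (split_ordP i) => i' ->; case: (split_ordP j) => j' ->.
- by rewrite block_mxEul !mxE.
- rewrite block_mxEur !mxE /=; have i'm := ltn_ord i'.
  case: ifP => [/andP[om /eqP e]|_].
    have j'0 : nat_of_ord j' = 0%N by lia.
    by move: om; rewrite j'0 addn0 (negbTE em).
  by case: ifP => // /andP[_ /eqP e]; exfalso; lia.
- rewrite block_mxEdl !mxE /=; have j'm := ltn_ord j'.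
  case: ifP => [/andP[_ /eqP e]|_]; first by exfalso; lia.
  case: ifP => // /andP[om /eqP e].
  have i'0 : nat_of_ord i' = 0%N by lia.
  by move: om; rewrite i'0 addn0 (negbTE em).
- rewrite block_mxEdr !mxE /= !oddD (negbTE em) /= -!addnS !eqn_add2l.
  by case: i' => [[|[|a]] ha]; case: j' => [[|[|b]] hb].
Qed.

Lemma susp2E m p (f : 'rV[R]_m -> 'rV[R]_p * 'rV[R]_p) :
  (forall (c : R) a, f (c *: a) = (c *: (f a).1, c *: (f a).2)) ->
  forall y, susp2 f y = (f (lsubmx y), rsubmx y).
Proof.
move=> fZ y; rewrite /susp2; case: eqP => [/vnorm_eq0 ->|/eqP s0].
  by have := fZ 0 0; rewrite !scale0r => ->.
by rewrite fZ /= !scalerA mulfV // !scale1r -surjective_pairing.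
Qed.

Lemma lamZ k (J : 'M[R]_k) (c : R) a :
  lam J (c *: a) = (c *: (lam J a).1, c *: (lam J a).2).
Proof. by rewrite /lam /= -scalemxAl scalerN. Qed.

Lemma reflZ k (c : R) (a : 'rV[R]_k) : refl (c *: a) = c *: refl a.
Proof. by apply/rowP => i; rewrite !mxE; case: ifP; rewrite ?mxE // mulrN. Qed.

Lemma refl_row_mx m (a : 'rV[R]_m) (b : 'rV[R]_2) : (0 < m)%N ->
  refl (row_mx a b) = row_mx (refl a) b.
Proof.
move=> m0; apply/rowP => i; rewrite !mxE.
case: (split_ordP i) => j -> /=; first by rewrite mxE.
by case: ifP => // /eqP; lia.
Qed.

Lemma refl_continuous k : continuous (@refl R k).
Proof.
apply/entry_continuousP => i j; under eq_fun do rewrite mxE.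
case: eqP => _; last exact: coord_continuous.
by move=> x; apply/continuousN/coord_continuous.
Qed.

Lemma refl_sphere k (x : 'rV[R]_k) : sphere x -> sphere (refl x).
Proof.
rewrite /sphere /= /vnorm /vdot => <-; congr Num.sqrt; apply: eq_bigr => i _.
by rewrite !mxE; case: ifP; rewrite ?mulrNN.
Qed.

Lemma iotaQ_lam m (J : 'M[R]_m) (v : 'rV[R]_m) (X : 'rV[R]_2) :
  iotaQ (lam J v, X) = lam (block_mx J 0 0 (jplus R)) (row_mx v X).
Proof. by rewrite /iotaQ /lam /= mul_row_block !mulmx0 !addr0 !add0r opp_row_mx. Qed.

Lemma homotopic_lam_block (pos : bool) n (J : 'M[R]_(2 * n))
    (J' : 'M[R]_(2 * n + 2)) (g : 'rV[R]_(2 * n + 2) -> 'rV[R]_(2 * n + 2)) :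
  ocs J -> ocs_oriented pos J -> ocs J' -> ocs_oriented pos J' ->
  continuous g -> (forall x, sphere x -> sphere (g x)) ->
  homotopic (@sphere R (2 * n + 2)) (@Qt R (2 * n + 2))
    (fun y => lam (block_mx J 0 0 (jplus R)) (g y)) (fun y => lam J' (g y)).
Proof.
move=> oJ sJ oJ' sJ' cg sg.
have even_2n : ~~ odd (2 * n) by rewrite oddM.
have even_2n2 : ~~ odd (2 * n + 2) by rewrite oddD oddM.
have [P [oP dP EP]] := ocs_oriented_conj_std even_2n oJ sJ.
have [P' [oP' dP' EP']] := ocs_oriented_conj_std even_2n2 oJ' sJ'.
pose P1 := block_mx P 0 0 (1%:M : 'M[R]_2).
have oP1 : orthmx P1 by exact: orthmx_block.
have EJ1 : block_mx J 0 0 (jplus R) = P1^T *m std_ocs R _ *m P1.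
  rewrite std_ocs_block // /P1 tr_block_mx !trmx0 trmx1 !mulmx_block.
  by rewrite !mulmx0 !mul0mx !addr0 !add0r !mul1mx !mulmx1 -EP mul0mx.
have [skewJ1 oJ1] := ocs_skew_orthmx (ocs_block oJ jplus_ocs).
pose Q := P1^T *m P'.
have oQ : orthmx Q by apply: orthmx_mul => //; exact: orthmx_tr.
have dQ : 0 < \det Q.
  rewrite det_mulmx det_tr det_ublock det1 mulr1.
  by case: pos dP dP' {sJ sJ'} => dP dP'; nra.
suff <- : Q^T *m block_mx J 0 0 (jplus R) *m Q = J' by exact: homotopic_lam_conj.
rewrite EJ1 /Q trmx_mul trmxK !mulmxA -(mulmxA P'^T) oP1 mulmx1.
by rewrite -(mulmxA (P'^T *m std_ocs R _)) oP1 mulmx1 EP'.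
Qed.

End DoubleSuspension.

Unset Implicit Arguments.

Theorem lemmaA1 (R : realType) (n : nat) (hn : (2 <= n)%N)
  (Jp Jm : 'M[R]_(2 * n)) (Jp' Jm' : 'M[R]_(2 * n + 2))
  (hJp : ocs_pos Jp) (hJm : ocs_neg Jm)
  (hJp' : ocs_pos Jp') (hJm' : ocs_neg Jm') :
  homotopic (@sphere R (2 * n + 2)) (@Qt R (2 * n + 2))
    (fun y => iotaQ (susp2 (lam Jp) y)) (lam Jp')
  /\
  homotopic (@sphere R (2 * n + 2)) (@Qt R (2 * n + 2))
    (fun y => iotaQ (susp2 (fun a => lam Jm (refl a)) y))
    (fun y => lam Jm' (refl y)).
Proof.
case: hJp hJm hJp' hJm' => [oJp sJp] [oJm sJm] [oJp' sJp'] [oJm' sJm'].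
split.
  have -> : (fun y => iotaQ (susp2 (lam Jp) y)) =
            (fun y => lam (block_mx Jp 0 0 (jplus R)) y).
    by apply/funext => y; rewrite susp2E ?iotaQ_lam ?hsubmxK //; exact: lamZ.
  apply: (homotopic_lam_block (g := fun y => y) oJp sJp oJp' sJp') => //.
  by move=> y; exact: cvg_id.
have -> : (fun y => iotaQ (susp2 (fun a => lam Jm (refl a)) y)) =
          (fun y => lam (block_mx Jm 0 0 (jplus R)) (refl y)).
  apply/funext => y; rewrite susp2E => [|c a]; last by rewrite reflZ lamZ.
  by rewrite iotaQ_lam -refl_row_mx ?hsubmxK // muln_gt0 (leq_trans _ hn).
exact: homotopic_lam_block oJm sJm oJm' sJm' (@refl_continuous R _) (@refl_sphere R _).
Qed.
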